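(* Let $(\mathcal A,\mathcal B,\mathcal C)$ be a generic triple of flags in an $m$-dimensional $R$-vector space $V$. For integers $a,b,c\ge1$ with $a+b+c=m+2$, the space $\mathcal A^{a-1}\cap\mathcal B^{b-1}\cap\mathcal C^{c-1}$ is a line, and the compositions of its inclusion with the projections give isomorphisms onto $\mathrm{gr}^a\mathcal A$, $\mathrm{gr}^b\mathcal B$, $\mathrm{gr}^c\mathcal C$; composing the inverse of one of these with another yields canonical isomorphisms between any two of $\mathrm{gr}^a\mathcal A,\mathrm{gr}^b\mathcal B,\mathrm{gr}^c\mathcal C$. Then: (1) for any $a,b,c\ge1$ with $a+b+c=m+2$, the composition of the canonical isomorphisms $\mathrm{gr}^a\mathcal A\to\mathrm{gr}^b\mathcal B\to\mathrm{gr}^c\mathcal C\to\mathrm{gr}^a\mathcal A$ is the identity; (2) for any $a,b,c\ge2$ with $a+b+c=m+4$, the composition of the six canonical isomorphisms around the hexagon $$\mathrm{gr}^a\mathcal A\to\mathrm{gr}^{b-1}\mathcal B\to\mathrm{gr}^{c}\mathcal C\to\mathrm{gr}^{a-1}\mathcal A\to\mathrm{gr}^{b}\mathcal B\to\mathrm{gr}^{c-1}\mathcal C\to\mathrm{gr}^a\mathcal A$$ equals $-\mathrm{Id}$.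
   Context: $R$ is a skew field; vector spaces are free left $R$-modules. A flag $\mathcal F$ in $V$ is a filtration $V=\mathcal F^0\supset\dots\supset\mathcal F^m=0$ with $\operatorname{codim}\mathcal F^i=i$, and $\mathrm{gr}^i\mathcal F:=\mathcal F^{i-1}/\mathcal F^i$. A triple of flags is generic if $V\to V/\mathcal A^a\oplus V/\mathcal B^b\oplus V/\mathcal C^c$ is an isomorphism for all $a,b,c\ge0$ with $a+b+c=m$. *)

From HB Require Import structures.
From mathcomp Require Import all_boot all_algebra.
Set Implicit Arguments. Unset Strict Implicit. Unset Printing Implicit Defensive.
Import GRing.Theory.
Local Open Scope ring_scope.

(* The m-dimensional left R-vector space V is 'rV[R]_m (left scaling *:). *)

Section Defs.
Variables (R : unitRingType) (m : nat).
Local Notation V := 'rV[R]_m.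

Definition skew_field := forall x : R, x != 0 -> x \is a GRing.unit.

Definition subspace (S : V -> Prop) : Prop :=
  [/\ S 0, (forall u v, S u -> S v -> S (u + v)) &
      (forall (a : R) u, S u -> S (a *: u))].

Definition lin_indep (d : nat) (v : 'I_d -> V) : Prop :=
  forall c : 'I_d -> R, \sum_(i < d) c i *: v i = 0 -> forall i, c i = 0.

Definition has_dim (S : V -> Prop) (d : nat) : Prop :=
  subspace S /\
  exists v : 'I_d -> V, [/\ forall i, S (v i), lin_indep v &
     forall x, S x -> exists c : 'I_d -> R, x = \sum_(i < d) c i *: v i].

(* V = F 0 ⊃ F 1 ⊃ ... ⊃ F m = 0 with codim (F i) = i *)
Definition is_flag (F : nat -> V -> Prop) : Prop :=
  (forall i, (i <= m)%N -> has_dim (F i) (m - i)) /\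
  (forall i, (i < m)%N -> forall v, F i.+1 v -> F i v).

(* V -> V/A^a ⊕ V/B^b ⊕ V/C^c, v |-> (v mod A^a, v mod B^b, v mod C^c),
   is injective (kernel A^a ∩ B^b ∩ C^c is 0) and surjective. *)
Definition generic (A B C : nat -> V -> Prop) : Prop :=
  forall a b c, (a + b + c)%N = m ->
    (forall v, A a v -> B b v -> C c v -> v = 0) /\
    (forall x y z : V, exists v, [/\ A a (v - x), B b (v - y) & C c (v - z)]).

Definition tri_cap (A B C : nat -> V -> Prop) (a b c : nat) : V -> Prop :=
  fun v => [/\ A a.-1 v, B b.-1 v & C c.-1 v].

(* the projection L -> gr^a F = F^(a-1)/F^a (L ⊆ F^(a-1)) is an isomorphism:
   injective (kernel L ∩ F^a is 0) and surjective. *)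
Definition proj_gr_iso (L : V -> Prop) (F : nat -> V -> Prop) (a : nat) : Prop :=
  (forall l, L l -> F a l -> l = 0) /\
  (forall x, F a.-1 x -> exists l, L l /\ F a (l - x)).

(* canonical isomorphism gr^a F -> gr^b G through the line
   F^(a-1) ∩ G^(b-1) ∩ H^(c-1) (with a+b+c = m+2), expressed on
   representatives: canon F G H a b c x y  means that the class of
   y in gr^b G is the image of the class of x in gr^a F. *)
Definition canon (F G H : nat -> V -> Prop) (a b c : nat) (x y : V) : Prop :=
  exists l, [/\ tri_cap F G H a b c l, F a (l - x) & G b (l - y)].

End Defs.

From HB Require Import structures.
From mathcomp Require Import all_boot all_algebra zify.
From Stdlib Require Import Classical.
Import GRing.Theory.
Set Implicit Arguments. Unset Strict Implicit.
Local Open Scope ring_scope.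

(* Used with
   (a, b-1, c-1), it makes the projection of L = A^(a-1) ∩ B^(b-1) ∩ C^(c-1)
   onto gr^a A bijective, and gr^a A is a line by Steinitz exchange over the
   skew field R.  So each canonical isomorphism is induced by one vector of L,
   and that same vector induces the next isomorphism of the triangle, which
   therefore closes up.  The hexagon runs through three lines of the plane
   A^(a-2) ∩ B^(b-2) ∩ C^(c-2); if l1, l6 represent its start and end on the
   first line and u is the difference of the representatives on the other two
   lines, then l1 + u and l6 - u lie in triple intersections of total
   codimension m, so l6 = u = -l1. *)

Section Subspace.
Variables (R : unitRingType) (m : nat) (S : 'rV[R]_m -> Prop).
Hypothesis hS : subspace S.

Lemma subspace0 : S 0.
Proof. by case: hS. Qed.

Lemma subspaceD u v : S u -> S v -> S (u + v).
Proof. by case: hS => _ hD _; apply: hD. Qed.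

Lemma subspaceZ a u : S u -> S (a *: u).
Proof. by case: hS => _ _ hZ; apply: hZ. Qed.

Lemma subspaceN u : S u -> S (- u).
Proof. by rewrite -scaleN1r; apply: subspaceZ. Qed.

Lemma subspaceB u v : S u -> S v -> S (u - v).
Proof. by move=> hu /subspaceN; apply: subspaceD. Qed.

Lemma subspace_subC u v : S (u - v) -> S (v - u).
Proof. by move=> huv; rewrite -opprB; apply: subspaceN. Qed.

Lemma subspace_sub_trans u v w : S (u - v) -> S (v - w) -> S (u - w).
Proof. by move=> huv hvw; rewrite -(subrKA v); apply: subspaceD. Qed.

Lemma subspace_sub_common x u v : S (u - x) -> S (v - x) -> S (u - v).
Proof. by move=> hux /subspace_subC; apply: subspace_sub_trans. Qed.

Lemma subspace_sum n (c : 'I_n -> R) (w : 'I_n -> 'rV[R]_m) :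
  (forall i, S (w i)) -> S (\sum_(i < n) c i *: w i).
Proof.
move=> hw; apply: (big_ind S subspace0 subspaceD) => i _.
exact: subspaceZ.
Qed.

End Subspace.

Section LinearIndependence.
Variables (R : unitRingType) (HR : skew_field R) (m : nat).
Local Notation V := 'rV[R]_m.

Lemma scale_unit_eq0 (a : R) (v : V) :
  a \is a GRing.unit -> a *: v = 0 -> v = 0.
Proof.
by move=> ua hav; rewrite -[v]scale1r -(mulVr ua) -scalerA hav scaler0.
Qed.

Lemma lin_indep_lift_sub k (v : 'I_k.+1 -> V) (i0 : 'I_k.+1) (d : 'I_k -> R) :
  lin_indep v -> lin_indep (fun j => v (lift i0 j) - d j *: v i0).
Proof.
move=> hv e he j.
pose E i := if unlift i0 i is Some j then e j else - \sum_(j < k) e j * d j.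
suff /hv/(_ (lift i0 j)) : \sum_i E i *: v i = 0 by rewrite /E liftK.
rewrite (bigD1_ord i0) //= /E unlift_none.
under eq_bigr => i _ do rewrite liftK.
rewrite -[RHS]he scaleNr addrC scaler_suml -sumrB.
by apply: eq_bigr => i _; rewrite scalerBr scalerA.
Qed.

(* Steinitz exchange: pivoting on a v i0 with a nonzero last coordinate leaves k-1
   independent vectors spanned by the first n vectors w j. *)
Lemma lin_indep_span_leq n k (v : 'I_k -> V) (w : 'I_n -> V)
    (c : 'I_k -> 'I_n -> R) :
  lin_indep v -> (forall i, v i = \sum_(j < n) c i j *: w j) -> (k <= n)%N.
Proof.
elim: n k v w c => [|n IHn] [|k] v w c hv hvw //.
  suff /eqP : (1 : R) = 0 by rewrite oner_eq0.
  apply: (hv (fun _ => 1) _ ord0); apply: big1 => i _.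
  by rewrite scale1r hvw big_ord0.
pose w' j := w (widen_ord (leqnSn n) j).
have [i0 hi0|c_max0] := pickP (fun i => c i ord_max != 0); last first.
  apply: leqW; apply: (IHn _ _ w' (fun i j => c i (widen_ord _ j)) hv) => i.
  by rewrite hvw big_ord_recr /= (eqP (negbFE (c_max0 i))) scale0r addr0.
have u_unit : c i0 ord_max \is a GRing.unit := HR hi0.
pose d (j : 'I_k) := c (lift i0 j) ord_max / c i0 ord_max.
pose c' (j : 'I_k) (t : 'I_n) :=
  c (lift i0 j) (widen_ord (leqnSn n) t) - d j * c i0 (widen_ord (leqnSn n) t).
have v'_indep := lin_indep_lift_sub (i0 := i0) (d := d) hv.
rewrite ltnS; apply: (IHn _ _ w' c' v'_indep) => j.
rewrite !hvw scaler_sumr -sumrB.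
under eq_bigr => i _ do rewrite scalerA -scalerBl.
by rewrite big_ord_recr /= /d -mulrA (mulVr u_unit) mulr1 subrr scale0r addr0.
Qed.

Lemma has_dim_indep_leq S n k (v : 'I_k -> V) :
  has_dim S n -> lin_indep v -> (forall i, S (v i)) -> (k <= n)%N.
Proof.
case=> _ [w [_ _ hw]] hv hvS.
have [c hc] := fin_all_exists (fun i => hw _ (hvS i)).
exact: lin_indep_span_leq hv hc.
Qed.

Definition fam_rcons k (v : 'I_k -> V) (y : V) : 'I_k.+1 -> V :=
  fun t => if unlift ord_max t is Some t' then v t' else y.

Lemma fam_rconsP k (v : 'I_k -> V) y (P : V -> Prop) :
  (forall i, P (v i)) -> P y -> forall t, P (fam_rcons v y t).
Proof. by move=> hv hy t; rewrite /fam_rcons; case: unliftP. Qed.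

Lemma sum_fam_rcons k (c : 'I_k.+1 -> R) (v : 'I_k -> V) y :
  \sum_i c i *: fam_rcons v y i =
  \sum_(i < k) c (lift ord_max i) *: v i + c ord_max *: y.
Proof.
rewrite (bigD1_ord ord_max) //= addrC /fam_rcons unlift_none.
by under eq_bigr => i _ do rewrite liftK.
Qed.

Lemma lin_indep_rcons k (v : 'I_k -> V) y : lin_indep v ->
  (forall c : 'I_k -> R, y <> \sum_(i < k) c i *: v i) ->
  lin_indep (fam_rcons v y).
Proof.
move=> hv hy e; rewrite sum_fam_rcons => he.
have e_max : e ord_max = 0.
  case: (eqVneq (e ord_max) 0) => // /HR e_unit; exfalso.
  apply: (hy (fun i => - ((e ord_max)^-1 * e (lift ord_max i)))).
  rewrite -[y]scale1r -(mulVr e_unit) -scalerA.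
  move/eqP: he; rewrite addrC addr_eq0 => /eqP ->.
  rewrite scalerN scaler_sumr -sumrN; apply: eq_bigr => i _.
  by rewrite scalerA scaleNr.
move: he; rewrite e_max scale0r addr0 => /hv he t.
by case: (unliftP ord_max t) => [j ->|->].
Qed.

End LinearIndependence.

Section Flag.
Variables (R : unitRingType) (HR : skew_field R) (m : nat).
Variables (F : nat -> 'rV[R]_m -> Prop) (hF : is_flag F).

Lemma flag_subspace i : (i <= m)%N -> subspace (F i).
Proof. by case/(hF.1 i). Qed.

Lemma flag_antimono i j v : (i <= j)%N -> (j <= m)%N -> F j v -> F i v.
Proof.
elim: j => [|j IHj]; first by rewrite leqn0 => /eqP ->.
rewrite leq_eqVlt => /predU1P[-> // | lt_ij] lt_jm /(hF.2 j lt_jm).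
exact: IHj (ltnW lt_jm).
Qed.

Lemma flag_gr_nontrivial i : (0 < i <= m)%N -> exists v, F i.-1 v /\ ~ F i v.
Proof.
case: i => // i /= lt_im.
have [_ [u [u_in u_indep _]]] := hF.1 i (ltnW lt_im).
have : ~ (forall t, F i.+1 (u t)).
  by move/(has_dim_indep_leq HR (hF.1 i.+1 lt_im) u_indep); lia.
by move/not_all_ex_not => [t ht]; exists (u t).
Qed.

(* Otherwise a basis of F^i together with v0 and x would be m-i+1 independent
   vectors in F^(i-1), which has dimension m-i. *)
Lemma flag_gr_line i v0 x : (0 < i <= m)%N ->
  F i.-1 v0 -> ~ F i v0 -> F i.-1 x -> exists r, F i (x - r *: v0).
Proof.
case: i => // i /= lt_im v0_in v0_out x_in; apply: NNPP => x_indep.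
have [sub1 [w [w_in w_indep _]]] := hF.1 i.+1 lt_im.
have indep1 : lin_indep (fam_rcons w v0).
  apply: lin_indep_rcons => // c hc; apply: v0_out; rewrite hc.
  exact: subspace_sum.
have indep2 : lin_indep (fam_rcons (fam_rcons w v0) x).
  apply: lin_indep_rcons => // c hc; apply: x_indep; exists (c ord_max).
  by rewrite hc sum_fam_rcons addrK; apply: subspace_sum.
have in_Fi : forall t, F i (fam_rcons (fam_rcons w v0) x t).
  by do 2![apply: fam_rconsP => //] => t; apply: hF.2.
have := has_dim_indep_leq HR (hF.1 i (ltnW lt_im)) indep2 in_Fi; lia.
Qed.

End Flag.

Section Generic.
Variables (R : unitRingType) (m : nat) (F G H : nat -> 'rV[R]_m -> Prop).
Local Notation V := 'rV[R]_m.

Lemma generic_rot : generic F G H -> generic G H F.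
Proof.
move=> hgen b c a habc; have [inj surj] := hgen a b c ltac:(lia).
split=> [v hb hc ha | x y z]; first exact: inj.
by have [v [hx hy hz]] := surj z x y; exists v.
Qed.

Lemma tri_cap_rot a b c v : tri_cap F G H a b c v -> tri_cap G H F b c a v.
Proof. by case. Qed.

Lemma proj_gr_iso_equiv (L L' : V -> Prop) a :
  (forall v, L v -> L' v) -> (forall v, L' v -> L v) ->
  proj_gr_iso L F a -> proj_gr_iso L' F a.
Proof.
move=> LL' L'L [inj surj].
split=> [l /L'L | x /surj [l [/LL']]]; first exact: inj.
by exists l.
Qed.

Section Line.
Variables (a b c : nat).
Hypotheses (ha : (0 < a)%N) (hb : (0 < b)%N) (hc : (0 < c)%N).
Hypothesis habc : (a + b + c = m + 2)%N.

Lemma tri_cap_subspace :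
  is_flag F -> is_flag G -> is_flag H -> subspace (tri_cap F G H a b c).
Proof.
move=> hF hG hH.
have sF := flag_subspace hF (i := a.-1) ltac:(lia).
have sG := flag_subspace hG (i := b.-1) ltac:(lia).
have sH := flag_subspace hH (i := c.-1) ltac:(lia).
split=> [|u v [? ? ?] [? ? ?]|r u [? ? ?]]; split;
  by [apply: subspace0 | apply: subspaceD | apply: subspaceZ].
Qed.

Lemma tri_cap_meet_eq0 l :
  generic F G H -> tri_cap F G H a b c l -> F a l -> l = 0.
Proof.
by move=> hgen [_ hlG hlH] hlF; apply: (hgen a b.-1 c.-1 ltac:(lia)).1.
Qed.

Lemma tri_cap_proj_gr_iso :
  is_flag F -> generic F G H -> proj_gr_iso (tri_cap F G H a b c) F a.
Proof.
move=> hF hgen; split=> [l|x x_in]; first exact: tri_cap_meet_eq0.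
have [v [hvx hv0 hv0']] := (hgen a b.-1 c.-1 ltac:(lia)).2 x 0 0.
rewrite !subr0 in hv0 hv0'; exists v; split=> //; split=> //.
rewrite -(subrK x v); apply: (subspaceD (flag_subspace hF _)) => //; first lia.
by apply: (flag_antimono hF (j := a)) => //; lia.
Qed.

Lemma tri_cap_dim1 (HR : skew_field R) :
  is_flag F -> is_flag G -> is_flag H -> generic F G H ->
  has_dim (tri_cap F G H a b c) 1.
Proof.
move=> hF hG hH hgen.
have sL := tri_cap_subspace hF hG hH.
have sFa := flag_subspace hF (i := a) ltac:(lia).
have [v0 [v0_in v0_out]] := flag_gr_nontrivial HR hF (i := a) ltac:(lia).
have [inj surj] := tri_cap_proj_gr_iso hF hgen.
have [l [hl hlv0]] := surj v0 v0_in.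
have l_out : ~ F a l.
  by move=> hla; apply: v0_out; rewrite -(subKr l v0); apply: subspaceB.
split=> //; exists (fun _ => l); split=> // [e | y hy].
  rewrite big_ord1 => he i; rewrite (ord1 i).
  case: (eqVneq (e ord0) 0) => // /HR e_unit; exfalso; apply: l_out.
  by rewrite (scale_unit_eq0 e_unit he); apply: subspace0.
have [[lF _ _] [yF _ _]] := (hl, hy).
have [r hr] := flag_gr_line HR hF (i := a) ltac:(lia) lF l_out yF.
exists (fun _ => r); rewrite big_ord1; apply: subr0_eq.
by apply: inj => //; apply: subspaceB => //; apply: subspaceZ.
Qed.

Lemma tri_cap_eq_mod l l' :
  is_flag F -> is_flag G -> is_flag H -> generic F G H ->
  tri_cap F G H a b c l -> tri_cap F G H a b c l' -> F a (l - l') -> l = l'.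
Proof.
move=> hF hG hH hgen hl hl' hll'; apply: subr0_eq.
apply: tri_cap_meet_eq0 => //.
exact: (subspaceB (tri_cap_subspace hF hG hH) hl hl').
Qed.

Lemma canon_rep x y l :
  is_flag F -> is_flag G -> is_flag H -> generic F G H ->
  canon F G H a b c x y -> tri_cap F G H a b c l -> F a (l - x) -> G b (l - y).
Proof.
move=> hF hG hH hgen [l' [hl' hl'x hl'y]] hl hlx.
have sFa := flag_subspace hF (i := a) ltac:(lia).
suff -> : l = l' by [].
by apply: tri_cap_eq_mod => //; exact: (subspace_sub_common sFa hlx hl'x).
Qed.

End Line.
End Generic.

Section Canon.
Variables (R : unitRingType) (m : nat) (F G H : nat -> 'rV[R]_m -> Prop).
Hypotheses (hF : is_flag F) (hG : is_flag G) (hH : is_flag H).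
Hypothesis hgen : generic F G H.

Lemma canon_triangle a b c x y z w :
  (0 < a)%N -> (0 < b)%N -> (0 < c)%N -> (a + b + c = m + 2)%N ->
  canon F G H a b c x y -> canon G H F b c a y z -> canon H F G c a b z w ->
  F a (w - x).
Proof.
move=> ha hb hc habc [l [hl hlx hly]] hyz hzw.
have hgen' := generic_rot hgen; have hgen'' := generic_rot hgen'.
have /tri_cap_rot hl' := hl; have /tri_cap_rot hl'' := hl'.
have hbca : (b + c + a = m + 2)%N by lia.
have hcab : (c + a + b = m + 2)%N by lia.
have hlz := canon_rep hb hc ha hbca hG hH hF hgen' hyz hl' hly.
have hlw := canon_rep hc ha hb hcab hH hF hG hgen'' hzw hl'' hlz.
have sFa := flag_subspace hF (i := a) ltac:(lia).
exact: (subspace_sub_trans sFa (subspace_subC sFa hlw) hlx).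
Qed.

(* With u := l4 - l2, both l1 + u and l6 - u lie in a triple intersection of
   total codimension m, hence vanish. *)
Lemma hexagon_reps_opp a b c l1 l2 l4 l6 : (a + b + c + 2 = m)%N ->
  tri_cap F G H a.+2 b.+1 c.+1 l1 -> tri_cap F G H a.+2 b.+1 c.+1 l6 ->
  tri_cap F G H a.+1 b.+1 c.+2 l2 -> tri_cap F G H a.+1 b.+2 c.+1 l4 ->
  G b.+1 (l1 - l2) -> F a.+1 (l4 - l2) -> H c.+1 (l6 - l4) -> l6 = - l1.
Proof.
move=> habc /= [l1F _ l1H] [l6F l6G _] [_ l2G l2H] [_ l4G l4H] l12 l42 l64.
have sF := flag_subspace hF (i := a.+1) ltac:(lia).
have sG := flag_subspace hG (i := b) ltac:(lia).
have sG' := flag_subspace hG (i := b.+1) ltac:(lia).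
have sH := flag_subspace hH (i := c) ltac:(lia).
have sH' := flag_subspace hH (i := c.+1) ltac:(lia).
have l2H' : H c l2 by apply: (flag_antimono hH (j := c.+1)) => //; lia.
have l4G' : G b l4 by apply: (flag_antimono hG (j := b.+1)) => //; lia.
have /eqP : l1 + (l4 - l2) = 0.
  apply: (@hgen a.+1 b.+1 c ltac:(lia)).1; first exact: (subspaceD sF).
    by rewrite addrCA; apply: (subspaceD sG').
  by apply: (subspaceD sH) => //; apply: (subspaceB sH).
rewrite addrC addr_eq0 => /eqP <-; apply: subr0_eq.
apply: (@hgen a.+1 b c.+1 ltac:(lia)).1; first exact: (subspaceB sF).
  by apply: (subspaceB sG) => //; apply: (subspaceB sG).
by rewrite opprB addrCA; apply: (subspaceD sH').
Qed.

Lemma canon_hexagon a b c x0 x1 x2 x3 x4 x5 x6 :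
  (2 <= a)%N -> (2 <= b)%N -> (2 <= c)%N -> (a + b + c = m + 4)%N ->
  canon F G H a b.-1 c.-1 x0 x1 -> canon G H F b.-1 c a.-1 x1 x2 ->
  canon H F G c a.-1 b.-1 x2 x3 -> canon F G H a.-1 b c.-1 x3 x4 ->
  canon G H F b c.-1 a.-1 x4 x5 -> canon H F G c.-1 a b.-1 x5 x6 ->
  F a (x6 + x0).
Proof.
case: a b c => [|[|a]] // [|[|b]] // [|[|c]] // _ _ _ habc /=.
move=> [l1 [hl1 l1x0 l1x1]] [l2 [hl2 l2x1 l2x2]] h23.
move=> [l4 [hl4 l4x3 l4x4]] h45 [l6 [hl6 l6x5 l6x6]].
have hgen' := generic_rot hgen; have hgen'' := generic_rot hgen'.
have sF := flag_subspace hF (i := a.+1) ltac:(lia).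
have sG := flag_subspace hG (i := b.+1) ltac:(lia).
have sH := flag_subspace hH (i := c.+1) ltac:(lia).
have sF' := flag_subspace hF (i := a.+2) ltac:(lia).
have /tri_cap_rot hl2' := hl2; have /tri_cap_rot hl4' := hl4.
have l2x3 : F a.+1 (l2 - x3).
  by apply: (canon_rep _ _ _ _ hH hF hG hgen'' h23 hl2' l2x2) => //; lia.
have l4x5 : H c.+1 (l4 - x5).
  by apply: (canon_rep _ _ _ _ hG hH hF hgen' h45 hl4' l4x4) => //; lia.
have /tri_cap_rot hl2'' := hl2'; have /tri_cap_rot hl6' := hl6.
have l6E : l6 = - l1.
  apply: (hexagon_reps_opp _ hl1 hl6' hl2'' hl4); first lia.
  - exact: (subspace_sub_common sG l1x1 l2x1).
  - exact: (subspace_sub_common sF l4x3 l2x3).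
  - exact: (subspace_sub_common sH l6x5 l4x5).
have -> : x6 + x0 = - ((l6 - x6) + (l1 - x0)).
  by rewrite l6E addrACA addNr add0r opprD !opprK.
by apply: (subspaceN sF'); apply: (subspaceD sF').
Qed.

End Canon.

Theorem lemma2p3 (R : unitRingType) (HR : skew_field R) (m : nat)
  (A B C : nat -> 'rV[R]_m -> Prop)
  (hA : is_flag A) (hB : is_flag B) (hC : is_flag C)
  (hgen : generic A B C) :
  (forall a b c : nat, (1 <= a)%N -> (1 <= b)%N -> (1 <= c)%N ->
     (a + b + c)%N = (m + 2)%N ->
     [/\ has_dim (tri_cap A B C a b c) 1,
         proj_gr_iso (tri_cap A B C a b c) A a,
         proj_gr_iso (tri_cap A B C a b c) B b &
         proj_gr_iso (tri_cap A B C a b c) C c]) /\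
  (forall a b c : nat, (1 <= a)%N -> (1 <= b)%N -> (1 <= c)%N ->
     (a + b + c)%N = (m + 2)%N ->
     forall x y z w : 'rV[R]_m, A a.-1 x ->
       canon A B C a b c x y -> canon B C A b c a y z ->
       canon C A B c a b z w -> A a (w - x)) /\
  (forall a b c : nat, (2 <= a)%N -> (2 <= b)%N -> (2 <= c)%N ->
     (a + b + c)%N = (m + 4)%N ->
     forall x0 x1 x2 x3 x4 x5 x6 : 'rV[R]_m, A a.-1 x0 ->
       canon A B C a b.-1 c.-1 x0 x1 ->
       canon B C A b.-1 c a.-1 x1 x2 ->
       canon C A B c a.-1 b.-1 x2 x3 ->
       canon A B C a.-1 b c.-1 x3 x4 ->
       canon B C A b c.-1 a.-1 x4 x5 ->
       canon C A B c.-1 a b.-1 x5 x6 ->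
       A a (x6 + x0)).
Proof.
have hgen' := generic_rot hgen; have hgen'' := generic_rot hgen'.
split; [|split].
- move=> a b c ha hb hc habc.
  have hbca : (b + c + a = m + 2)%N by lia.
  have hcab : (c + a + b = m + 2)%N by lia.
  split.
  + exact: tri_cap_dim1.
  + exact: tri_cap_proj_gr_iso.
  + apply: (proj_gr_iso_equiv _ _ (tri_cap_proj_gr_iso hb hc ha hbca hB hgen')).
      by move=> v /tri_cap_rot /tri_cap_rot.
    exact: tri_cap_rot.
  + apply: (proj_gr_iso_equiv _ _ (tri_cap_proj_gr_iso hc ha hb hcab hC hgen'')).
      exact: tri_cap_rot.
    by move=> v /tri_cap_rot /tri_cap_rot.
- by move=> a b c ha hb hc habc x y z w _; apply: canon_triangle.
- by move=> a b c ha hb hc habc x0 x1 x2 x3 x4 x5 x6 _; apply: canon_hexagon.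
Qed.
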